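(* If $\vdash \mathbb{N}\ \checkmark$, then reducing $\mathbb{N}$: (1) there is never a type mismatch; (2) the communications occur in the order prescribed by global types.
   Context: Setting: a calculus of synchronous multiparty sessions with named checkpoints, where participants' configurations hold an active process and a sequence of checkpointed processes, and sessions can reduce forward (communications, choices) or roll back to a named checkpoint. A network $\mathbb{N}$ is a parallel composition $\mathbb{N}\,\|\,\mathbb{N}'$ of multiparty sessions $\mathbb{M}$, which reduce independently. $\vdash \mathbb{N}\ \checkmark$ means the network is well typed, i.e. every multiparty session in it is typable by some global type $\langle\Upsilon,\mathsf{G}\rangle$ (a pair of a sequence $\Upsilon$ of checkpointed single-threaded global types and an active single-threaded global type $\mathsf{G}$ describing the protocol), with each participant's configuration type agreeing (via subtyping) with the projections of the global type. An application of the communication reduction rule has a type mismatch if there is no sort that can be derived both for the communicated value and for the variable associated to the communicated label in the input process. *)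

From Stdlib Require Import List Bool Arith.
Import ListNotations.

Definition part := nat.
Definition label := nat.
Definition cname := nat.
Definition var := nat.

Inductive sort := SNat | SBool.
Inductive value := VNat (n : nat) | VBool (b : bool).

Inductive val_has_sort : value -> sort -> Prop :=
| vs_nat n : val_has_sort (VNat n) SNat
| vs_bool b : val_has_sort (VBool b) SBool.

Inductive expr := EVar (x : var) | EVal (v : value).

(** Single-threaded processes:
    0 | q ! { l_i(e_i).P_i }  (internal choice)
      | p ? { l_i(x_i : S_i).P_i } (external choice)
      | checkpoint c. P  *)
Inductive proc :=
| Inact
| Out (q : part) (bs : list (label * expr * proc))
| Inp (p : part) (bs : list (label * var * sort * proc))
| Chk (c : cname) (P : proc).

Definition subst_expr (x : var) (v : value) (e : expr) : expr :=
  match e with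
  | EVar y => if Nat.eqb x y then EVal v else e
  | EVal _ => e
  end.

Fixpoint subst (x : var) (v : value) (P : proc) : proc :=
  match P with
  | Inact => Inact
  | Out q bs =>
      Out q (map (fun b => match b with (l, e, P') => (l, subst_expr x v e, subst x v P') end) bs)
  | Inp p bs =>
      Inp p (map (fun b => match b with (l, y, Srt, P') =>
                   (l, y, Srt, if Nat.eqb x y then P' else subst x v P') end) bs)
  | Chk c P' => Chk c (subst x v P')
  end.

Record config := mkC { saved : list (cname * proc); active : proc }.

(** Multiparty sessions: parallel composition of participants p[[C]] *)
Definition session := list (part * config).

Definition upd (p : part) (C : config) (M : session) : session :=
  map (fun e => if Nat.eqb (fst e) p then (p, C) else e) M.

(** Actions (applications of reduction rules).  A communication records the
    communicated value [v] and the variable [x] of the input branch with its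
    sort [Srt]. *)
Inductive act :=
| AComm (p q : part) (l : label) (v : value) (x : var) (Srt : sort)
| AChk (c : cname)
| ARoll (c : cname).

Inductive glabel :=
| LbComm (p q : part) (l : label)
| LbChk (c : cname)
| LbRoll (c : cname).

Definition label_of (a : act) : glabel :=
  match a with
  | AComm p q l _ _ _ => LbComm p q l
  | AChk c => LbChk c
  | ARoll c => LbRoll c
  end.

(** Type mismatch: no sort is derivable both for the value and for the variable
    associated to the label in the input process (whose sort is [Srt]). *)
Definition type_mismatch (v : value) (Srt : sort) : Prop :=
  ~ (exists Srt', val_has_sort v Srt' /\ Srt' = Srt).

Inductive sstep : session -> act -> session -> Prop :=
| ss_comm M p q sp sq bs cs l v P x Srt Q :
    p <> q ->
    In (p, mkC sp (Out q bs)) M ->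
    In (q, mkC sq (Inp p cs)) M ->
    In (l, EVal v, P) bs ->
    In (l, x, Srt, Q) cs ->
    sstep M (AComm p q l v x Srt) (upd q (mkC sq (subst x v Q)) (upd p (mkC sp P) M))
| ss_chk M c M' :
    M <> [] ->
    Forall2 (fun e e' => fst e = fst e' /\
               exists P, active (snd e) = Chk c P /\
                         snd e' = mkC (saved (snd e) ++ [(c, P)]) P) M M' ->
    sstep M (AChk c) M'
| ss_roll M c M' :
    M <> [] ->
    Forall2 (fun e e' => fst e = fst e' /\
               exists s1 P s2, saved (snd e) = s1 ++ (c, P) :: s2 /\
                               ~ In c (map fst s2) /\
                               snd e' = mkC (s1 ++ [(c, P)]) P) M M' ->
    sstep M (ARoll c) M'.

Inductive network :=
| NSes (M : session)
| NPar (N1 N2 : network).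

(* positions of sessions in a network: false = left, true = right *)
Fixpoint session_at (N : network) (pos : list bool) : option session :=
  match N, pos with
  | NSes M, [] => Some M
  | NPar N1 _, false :: pos' => session_at N1 pos'
  | NPar _ N2, true :: pos' => session_at N2 pos'
  | _, _ => None
  end.

Inductive nstep : network -> list bool -> act -> network -> Prop :=
| ns_ses M a M' : sstep M a M' -> nstep (NSes M) [] a (NSes M')
| ns_left N1 N2 pos a N1' : nstep N1 pos a N1' -> nstep (NPar N1 N2) (false :: pos) a (NPar N1' N2)
| ns_right N1 N2 pos a N2' : nstep N2 pos a N2' -> nstep (NPar N1 N2) (true :: pos) a (NPar N1 N2').

Inductive nsteps : network -> list (list bool * act) -> network -> Prop :=
| nsteps_refl N : nsteps N [] N
| nsteps_step N pos a N' tr N'' :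
    nstep N pos a N' -> nsteps N' tr N'' -> nsteps N ((pos, a) :: tr) N''.

Definition trace_at (pos : list bool) (tr : list (list bool * act)) : list glabel :=
  map (fun pa => label_of (snd pa))
      (filter (fun pa => if list_eq_dec bool_dec (fst pa) pos then true else false) tr).

Inductive ltype :=
| LEnd
| LOut (q : part) (bs : list (label * sort * ltype))
| LIn (p : part) (bs : list (label * sort * ltype))
| LChk (c : cname) (T : ltype).

Inductive subtype : ltype -> ltype -> Prop :=
| sub_end : subtype LEnd LEnd
| sub_out q bs bs' :
    bs <> [] ->
    (forall l Srt T, In (l, Srt, T) bs -> exists T', In (l, Srt, T') bs' /\ subtype T T') ->
    subtype (LOut q bs) (LOut q bs')
| sub_in p bs bs' :
    bs' <> [] ->
    (forall l Srt T', In (l, Srt, T') bs' -> exists T, In (l, Srt, T) bs /\ subtype T T') ->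
    subtype (LIn p bs) (LIn p bs')
| sub_chk c T T' : subtype T T' -> subtype (LChk c T) (LChk c T').

Definition env := var -> option sort.
Definition empty_env : env := fun _ => None.
Definition extend (G : env) (x : var) (Srt : sort) : env :=
  fun y => if Nat.eqb y x then Some Srt else G y.

Inductive expr_typed (G : env) : expr -> sort -> Prop :=
| et_var x Srt : G x = Some Srt -> expr_typed G (EVar x) Srt
| et_val v Srt : val_has_sort v Srt -> expr_typed G (EVal v) Srt.

Inductive proc_typed : env -> proc -> ltype -> Prop :=
| pt_inact G : proc_typed G Inact LEnd
| pt_out G q bs Ts :
    bs <> [] -> NoDup (map (fun b => fst (fst b)) bs) ->
    out_typed G bs Ts -> proc_typed G (Out q bs) (LOut q Ts)
| pt_in G p bs Ts :
    bs <> [] -> NoDup (map (fun b => fst (fst (fst b))) bs) ->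
    in_typed G bs Ts -> proc_typed G (Inp p bs) (LIn p Ts)
| pt_chk G c P T : proc_typed G P T -> proc_typed G (Chk c P) (LChk c T)
with out_typed : env -> list (label * expr * proc) -> list (label * sort * ltype) -> Prop :=
| ot_nil G : out_typed G [] []
| ot_cons G l e P Srt T bs Ts :
    expr_typed G e Srt -> proc_typed G P T -> out_typed G bs Ts ->
    out_typed G ((l, e, P) :: bs) ((l, Srt, T) :: Ts)
with in_typed : env -> list (label * var * sort * proc) -> list (label * sort * ltype) -> Prop :=
| it_nil G : in_typed G [] []
| it_cons G l x Srt P T bs Ts :
    proc_typed (extend G x Srt) P T -> in_typed G bs Ts ->
    in_typed G ((l, x, Srt, P) :: bs) ((l, Srt, T) :: Ts).

Definition config_typed (C : config) (tau : list (cname * ltype)) (T : ltype) : Prop :=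
  Forall2 (fun sp tt => fst sp = fst tt /\ proc_typed empty_env (snd sp) (snd tt)) (saved C) tau /\
  proc_typed empty_env (active C) T.

Inductive gtype :=
| GEnd
| GMsg (p q : part) (bs : list (label * sort * gtype))
| GChk (c : cname) (G : gtype).

Inductive part_of : part -> gtype -> Prop :=
| po_snd p q bs : part_of p (GMsg p q bs)
| po_rcv p q bs : part_of q (GMsg p q bs)
| po_br r p q bs l Srt G : In (l, Srt, G) bs -> part_of r G -> part_of r (GMsg p q bs)
| po_chk r c G : part_of r G -> part_of r (GChk c G).

(** Projection (partial; plain merge for non-involved participants) *)
Inductive projects : gtype -> part -> ltype -> Prop :=
| pr_end r : projects GEnd r LEnd
| pr_snd p q bs Ts :
    p <> q -> bs <> [] -> NoDup (map (fun b => fst (fst b)) bs) ->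
    projects_br p bs Ts -> projects (GMsg p q bs) p (LOut q Ts)
| pr_rcv p q bs Ts :
    p <> q -> bs <> [] -> NoDup (map (fun b => fst (fst b)) bs) ->
    projects_br q bs Ts -> projects (GMsg p q bs) q (LIn p Ts)
| pr_other r p q bs T :
    r <> p -> r <> q -> p <> q -> bs <> [] -> NoDup (map (fun b => fst (fst b)) bs) ->
    (forall l Srt G, In (l, Srt, G) bs -> projects G r T) ->
    projects (GMsg p q bs) r T
| pr_chk r c G T : projects G r T -> projects (GChk c G) r (LChk c T)
with projects_br : part -> list (label * sort * gtype) -> list (label * sort * ltype) -> Prop :=
| pb_nil r : projects_br r [] []
| pb_cons r l Srt G T bs Ts :
    projects G r T -> projects_br r bs Ts -> projects_br r ((l, Srt, G) :: bs) ((l, Srt, T) :: Ts).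

Definition typed_session (M : session) (U : list (cname * gtype)) (G : gtype) : Prop :=
  NoDup (map fst M) /\
  (forall r, (part_of r G \/ exists c Gc, In (c, Gc) U /\ part_of r Gc) -> In r (map fst M)) /\
  (forall p C, In (p, C) M ->
     exists tau T, config_typed C tau T /\
       (exists TG, projects G p TG /\ subtype T TG) /\
       Forall2 (fun ct cg => fst ct = fst cg /\
                  exists TGc, projects (snd cg) p TGc /\ subtype (snd ct) TGc) tau U).

(* |- N  checkmark : every multiparty session in N is typable *)
Inductive wt_network : network -> Prop :=
| wt_ses M U G : typed_session M U G -> wt_network (NSes M)
| wt_par N1 N2 : wt_network N1 -> wt_network N2 -> wt_network (NPar N1 N2).

Inductive gstep : list (cname * gtype) -> gtype -> glabel -> list (cname * gtype) -> gtype -> Prop :=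
| gs_comm U p q bs l Srt G :
    In (l, Srt, G) bs -> gstep U (GMsg p q bs) (LbComm p q l) U G
| gs_inside U r s bs bs' p q l :
    p <> r -> p <> s -> q <> r -> q <> s -> bs <> [] ->
    Forall2 (fun b b' => fst b = fst b' /\ gstep U (snd b) (LbComm p q l) U (snd b')) bs bs' ->
    gstep U (GMsg r s bs) (LbComm p q l) U (GMsg r s bs')
| gs_chk U c G : gstep U (GChk c G) (LbChk c) (U ++ [(c, G)]) G
| gs_roll U G c U1 Gc U2 :
    U = U1 ++ (c, Gc) :: U2 -> ~ In c (map fst U2) ->
    gstep U G (LbRoll c) (U1 ++ [(c, Gc)]) Gc.

Inductive gtrace : list (cname * gtype) -> gtype -> list glabel -> Prop :=
| gt_nil U G : gtrace U G []
| gt_cons U G l U' G' tr : gstep U G l U' G' -> gtrace U' G' tr -> gtrace U G (l :: tr).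

(* Subject reduction: every reduction of a session typed by <Upsilon, G> is matched by
   a reduction of <Upsilon, G> with the same label, and the reduct is typed by the
   reduct; both claims then follow along any reduction sequence. For a communication
   p -> q : l, the projection of G on p fixes the sort S of the sent value, while the
   projection on q offers l with the same sort S; input subtyping and duplicate-free
   labels force the receiver's variable to have sort S. Checkpoints and rollbacks are
   matched because the saved processes of every participant are aligned, name by name,
   with Upsilon. *)

From Stdlib Require Import List Bool Arith FunctionalExtensionality.
Import ListNotations.

Lemma Forall2_In_l {A B} (R : A -> B -> Prop) l l' a :
  Forall2 R l l' -> In a l -> exists b, In b l' /\ R a b.
Proof.
  induction 1 as [|x y l l' Rxy _ IH]; simpl; [tauto|]. intros [<-|Ha]; [eauto|].
  destruct (IH Ha) as [b [Hb Rab]]; eauto.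
Qed.

Lemma Forall2_In_r {A B} (R : A -> B -> Prop) l l' b :
  Forall2 R l l' -> In b l' -> exists a, In a l /\ R a b.
Proof.
  induction 1 as [|x y l l' Rxy _ IH]; simpl; [tauto|]. intros [<-|Hb]; [eauto|].
  destruct (IH Hb) as [a [Ha Rab]]; eauto.
Qed.

Lemma Forall2_map_eq {A B C} (f : A -> C) (g : B -> C) (R : A -> B -> Prop) l l' :
  Forall2 R l l' -> (forall a b, R a b -> f a = g b) -> map f l = map g l'.
Proof. induction 1; simpl; intros; f_equal; auto. Qed.

Lemma Forall2_of_forall_exists {A B} (R : A -> B -> Prop) l :
  (forall a, In a l -> exists b, R a b) -> exists l', Forall2 R l l'.
Proof.
  induction l as [|a l IH]; intros H; [exists []; constructor|].
  destruct (H a (or_introl eq_refl)) as [b Hb].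
  destruct IH as [l' Hl']; [intros; apply H; simpl; auto|].
  exists (b :: l'); constructor; auto.
Qed.

Lemma Forall2_app_cons_inv {A B} (R : A -> B -> Prop) l1 a l2 l1' b l2' :
  length l1 = length l1' -> Forall2 R (l1 ++ a :: l2) (l1' ++ b :: l2') ->
  Forall2 R l1 l1' /\ R a b.
Proof.
  revert l1'; induction l1 as [|x l1 IH]; intros [|y l1'] Hlen H; try discriminate;
    inversion H; subst; auto.
  destruct (IH l1') as [? ?]; auto.
Qed.

Lemma NoDup_map_In_inj {A B} (f : A -> B) l a b :
  NoDup (map f l) -> In a l -> In b l -> f a = f b -> a = b.
Proof.
  induction l as [|x l IH]; simpl; [tauto|]. intros Hnd Ha Hb Hf.
  inversion Hnd as [|? ? Hx Hnd']; subst.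
  destruct Ha as [<-|Ha], Hb as [<-|Hb]; auto;
    exfalso; apply Hx; [rewrite Hf|rewrite <- Hf]; apply in_map; auto.
Qed.

Lemma extend_shadow G x S S' : extend (extend G x S) x S' = extend G x S'.
Proof. apply functional_extensionality; intro y; unfold extend; destruct (y =? x); auto. Qed.

Lemma extend_comm G x y S S' :
  x <> y -> extend (extend G x S) y S' = extend (extend G y S') x S.
Proof.
  intros Hxy; apply functional_extensionality; intro z; unfold extend.
  destruct (z =? y) eqn:Ey, (z =? x) eqn:Ex; auto.
  apply Nat.eqb_eq in Ey, Ex; subst; congruence.
Qed.

Lemma subst_expr_typed G x S v e Srt :
  expr_typed (extend G x S) e Srt -> val_has_sort v S -> expr_typed G (subst_expr x v e) Srt.
Proof.
  intros He Hv; inversion He as [y Sy Hy|]; subst; simpl; [|constructor; auto].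
  unfold extend in Hy; rewrite Nat.eqb_sym in Hy; destruct (x =? y).
  - inversion Hy; subst; constructor; auto.
  - constructor; auto.
Qed.

Scheme proc_typed_mut := Induction for proc_typed Sort Prop
with out_typed_mut := Induction for out_typed Sort Prop
with in_typed_mut := Induction for in_typed Sort Prop.
Combined Scheme typed_mutind from proc_typed_mut, out_typed_mut, in_typed_mut.

Lemma subst_typed_mutual :
  (forall G' P T, proc_typed G' P T -> forall G x S v, G' = extend G x S -> val_has_sort v S ->
     proc_typed G (subst x v P) T) /\
  (forall G' bs Ts, out_typed G' bs Ts -> forall G x S v, G' = extend G x S -> val_has_sort v S ->
     out_typed G (map (fun b => match b with (l, e, P) => (l, subst_expr x v e, subst x v P) end) bs) Ts) /\
  (forall G' bs Ts, in_typed G' bs Ts -> forall G x S v, G' = extend G x S -> val_has_sort v S ->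
     in_typed G (map (fun b => match b with (l, y, Srt, P) =>
                   (l, y, Srt, if Nat.eqb x y then P else subst x v P) end) bs) Ts).
Proof.
  apply typed_mutind.
  8: { (* an input branch binding [y], which may shadow [x] *)
    intros Gx l y Srt P T bs Ts HP IHP _ IHbs G x S v -> Hv; simpl.
    constructor; eauto.
    destruct (Nat.eqb x y) eqn:E.
    - apply Nat.eqb_eq in E; subst. rewrite extend_shadow in HP; exact HP.
    - apply Nat.eqb_neq in E. eapply IHP; eauto using extend_comm. }
  all: intros; subst; simpl; try (constructor; eauto using subst_expr_typed; fail).
  - constructor; eauto.
    + destruct bs; simpl; congruence.
    + rewrite map_map; erewrite map_ext; [eassumption|]. intros [[? ?] ?]; reflexivity.
  - constructor; eauto.
    + destruct bs; simpl; congruence.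
    + rewrite map_map; erewrite map_ext; [eassumption|]. intros [[[? ?] ?] ?]; reflexivity.
Qed.

Lemma subst_typed P T x S v :
  proc_typed (extend empty_env x S) P T -> val_has_sort v S ->
  proc_typed empty_env (subst x v P) T.
Proof. intros; eapply subst_typed_mutual; eauto. Qed.

Fixpoint gtype_nested_ind (P : gtype -> Prop) (HE : P GEnd)
  (HM : forall p q bs, Forall (fun b => P (snd b)) bs -> P (GMsg p q bs))
  (HC : forall c G, P G -> P (GChk c G)) (G : gtype) : P G :=
  match G with
  | GEnd => HE
  | GMsg p q bs => HM p q bs
      ((fix branches (bs : list (label * sort * gtype)) : Forall (fun b => P (snd b)) bs :=
          match bs with
          | [] => Forall_nil _
          | (ls, G0) :: bs' => Forall_cons (ls, G0) (gtype_nested_ind P HE HM HC G0) (branches bs')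
          end) bs)
  | GChk c G0 => HC c G0 (gtype_nested_ind P HE HM HC G0)
  end.

Lemma projects_br_In_r r bs Ts l S T :
  projects_br r bs Ts -> In (l, S, T) Ts -> exists G, In (l, S, G) bs /\ projects G r T.
Proof.
  induction 1 as [|r l0 S0 G0 T0 bs Ts HG _ IH]; simpl; [tauto|]. intros [E|Hin].
  - inversion E; subst; eauto.
  - destruct (IH Hin) as [G [? ?]]; eauto.
Qed.

Lemma projects_br_In_l r bs Ts l S G :
  projects_br r bs Ts -> In (l, S, G) bs -> exists T, In (l, S, T) Ts /\ projects G r T.
Proof.
  induction 1 as [|r l0 S0 G0 T0 bs Ts HG _ IH]; simpl; [tauto|]. intros [E|Hin].
  - inversion E; subst; eauto.
  - destruct (IH Hin) as [T [? ?]]; eauto.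
Qed.

Lemma projects_br_transfer r bs bs' Ts :
  Forall2 (fun b b' => fst b = fst b' /\
             forall T, projects (snd b) r T -> projects (snd b') r T) bs bs' ->
  projects_br r bs Ts -> projects_br r bs' Ts.
Proof.
  intros HF; revert Ts; induction HF as [|b b' bs bs' [Hlab Hpr] _ IH]; intros Ts Hbr;
    inversion Hbr; subst; [constructor|].
  destruct b' as [[l' S'] G']; simpl in *; inversion Hlab; subst.
  constructor; auto.
Qed.

(* [Ts] and [Tsq] are the branches of the projections of [G] on [p] and [q]. *)
Record comm_reduct U p q l S (Ts Tsq : list (label * sort * ltype)) G G' : Prop := {
  cr_step : gstep U G (LbComm p q l) U G';
  cr_sender : forall S' T, In (l, S', T) Ts -> projects G' p T;
  cr_receiver : forall S' T, In (l, S', T) Tsq -> projects G' q T;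
  cr_receiver_sort : exists T, In (l, S, T) Tsq;
  cr_others : forall r T, r <> p -> r <> q -> projects G r T -> projects G' r T;
  cr_part_of : forall r, part_of r G' -> part_of r G }.

Lemma comm_reduct_top U p q l S T bs Ts Tsq :
  NoDup (map (fun b => fst (fst b)) bs) ->
  projects_br p bs Ts -> projects_br q bs Tsq -> In (l, S, T) Ts ->
  exists G', comm_reduct U p q l S Ts Tsq (GMsg p q bs) G'.
Proof.
  intros Hnd Hbp Hbq HT.
  destruct (projects_br_In_r _ _ _ _ _ _ Hbp HT) as [Gl [Hin _]].
  assert (Hcont : forall r Ts' S' T', projects_br r bs Ts' -> In (l, S', T') Ts' -> projects Gl r T').
  { intros r Ts' S' T' Hbr HT'.
    destruct (projects_br_In_r _ _ _ _ _ _ Hbr HT') as [G1 [Hin1 HG1]].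
    assert (E := NoDup_map_In_inj _ _ _ _ Hnd Hin Hin1 eq_refl); inversion E; subst; auto. }
  exists Gl; split; eauto using gs_comm, po_br.
  - destruct (projects_br_In_l _ _ _ _ _ _ Hbq Hin) as [T' [? _]]; eauto.
  - intros r T' Hrp Hrq Hr; inversion Hr; subst; try congruence; eauto.
Qed.

Lemma comm_reduct_inside U p q l S Ts Tsq r s bs bs' :
  p <> r -> p <> s -> q <> r -> q <> s -> r <> s -> bs <> [] ->
  NoDup (map (fun b => fst (fst b)) bs) ->
  Forall2 (fun b b' => fst b = fst b' /\ comm_reduct U p q l S Ts Tsq (snd b) (snd b')) bs bs' ->
  comm_reduct U p q l S Ts Tsq (GMsg r s bs) (GMsg r s bs').
Proof.
  intros Hpr Hps Hqr Hqs Hrs Hne Hnd HF.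
  assert (Hne' : bs' <> []) by (destruct HF; congruence).
  assert (Hnd' : NoDup (map (fun b => fst (fst b)) bs')).
  { erewrite <- Forall2_map_eq; [exact Hnd|exact HF|]. intros b b' [-> _]; auto. }
  assert (Hbranch : forall l' S' G', In (l', S', G') bs' ->
    exists l0 S0 G, In (l0, S0, G) bs /\ comm_reduct U p q l S Ts Tsq G G').
  { intros l' S' G' Hin. destruct (Forall2_In_r _ _ _ _ HF Hin) as [[[l0 S0] G] [? [_ ?]]].
    eauto 6. }
  split.
  - apply gs_inside; auto. eapply Forall2_impl; [|exact HF]. intros b b' [? Hcr]; split; auto.
    apply Hcr.
  - intros S' T HT; apply pr_other; auto.
    intros l' S'' G' (l0 & S0 & G & _ & Hcr)%Hbranch; eapply cr_sender; eauto.
  - intros S' T HT; apply pr_other; auto.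
    intros l' S'' G' (l0 & S0 & G & _ & Hcr)%Hbranch; eapply cr_receiver; eauto.
  - destruct bs' as [|b' bs']; [congruence|].
    destruct (Forall2_In_r _ _ _ _ HF (or_introl eq_refl)) as [b [_ [_ Hcr]]].
    apply Hcr.
  - assert (Htr : forall r0, r0 <> p -> r0 <> q -> Forall2 (fun b b' => fst b = fst b' /\
                  forall T, projects (snd b) r0 T -> projects (snd b') r0 T) bs bs').
    { intros r0 Hr0p Hr0q; eapply Forall2_impl; [|exact HF].
      intros b b' [? Hcr]; split; auto. intros; eapply cr_others; eauto. }
    intros r0 T Hr0p Hr0q Hr0; inversion Hr0; subst.
    + apply pr_snd; eauto using projects_br_transfer.
    + apply pr_rcv; eauto using projects_br_transfer.
    + apply pr_other; auto.
      intros l' S' G' (l0 & S0 & G & HG & Hcr)%Hbranch; eapply cr_others; eauto.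
  - intros r0 Hr0; inversion Hr0 as [| |? ? ? ? l' S' G' Hin Hpo|]; subst; try constructor.
    destruct (Hbranch _ _ _ Hin) as (l0 & S0 & G & HG & Hcr).
    eapply po_br; [exact HG|]. eapply cr_part_of; eauto.
Qed.

Lemma projects_comm_reduct U p q l S T : p <> q -> forall G Ts Tsq,
  projects G p (LOut q Ts) -> projects G q (LIn p Tsq) -> In (l, S, T) Ts ->
  exists G', comm_reduct U p q l S Ts Tsq G G'.
Proof.
  intros Hpq G; induction G as [|r s bs IH|c G _] using gtype_nested_ind;
    intros Ts Tsq Hp Hq HT; inversion Hp; subst.
  - inversion Hq; subst; try congruence. eapply comm_reduct_top; eauto.
  - inversion Hq; subst; try congruence.
    rewrite Forall_forall in IH.
    destruct (Forall2_of_forall_exists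
                (fun b b' => fst b = fst b' /\ comm_reduct U p q l S Ts Tsq (snd b) (snd b')) bs)
      as [bs' HF].
    { intros [[l0 S0] G0] Hin. destruct (IH _ Hin Ts Tsq) as [G' Hcr]; eauto.
      exists (l0, S0, G'); auto. }
    exists (GMsg r s bs'); apply comm_reduct_inside; auto.
Qed.

Definition conforms (U : list (cname * gtype)) (G : gtype) (p : part) (C : config) : Prop :=
  exists tau T, config_typed C tau T /\
    (exists TG, projects G p TG /\ subtype T TG) /\
    Forall2 (fun ct cg => fst ct = fst cg /\
               exists TGc, projects (snd cg) p TGc /\ subtype (snd ct) TGc) tau U.

Definition session_part (U : list (cname * gtype)) (G : gtype) (r : part) : Prop :=
  part_of r G \/ exists c Gc, In (c, Gc) U /\ part_of r Gc.

Lemma typed_session_iff M U G :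
  typed_session M U G <->
  NoDup (map fst M) /\ (forall r, session_part U G r -> In r (map fst M)) /\
  (forall p C, In (p, C) M -> conforms U G p C).
Proof. reflexivity. Qed.

Lemma typed_session_conforms {M U G p C} :
  typed_session M U G -> In (p, C) M -> conforms U G p C.
Proof. intros (_ & _ & Hconf)%typed_session_iff; apply Hconf. Qed.

Lemma conforms_projects_mono U G G' r C :
  conforms U G r C -> (forall T, projects G r T -> projects G' r T) -> conforms U G' r C.
Proof.
  intros (tau & T & Hty & (TG & Hpr & Hsub) & HU) Hmono.
  exists tau, T; repeat split; eauto; apply Hty.
Qed.

Lemma In_upd r C p C' M :
  In (r, C) (upd p C' M) -> (r = p /\ C = C') \/ (r <> p /\ In (r, C) M).
Proof.
  unfold upd; intros ([r0 C0] & E & Hin)%in_map_iff; simpl in E.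
  destruct (Nat.eqb r0 p) eqn:Er0; inversion E; subst; auto.
  right; split; auto. intros ->; rewrite Nat.eqb_refl in Er0; discriminate.
Qed.

Lemma map_fst_upd p C M : map fst (upd p C M) = map fst M.
Proof.
  unfold upd; rewrite map_map; apply map_ext. intros [r C0]; simpl.
  destruct (Nat.eqb r p) eqn:E; simpl; auto. symmetry; apply Nat.eqb_eq; auto.
Qed.

Lemma typed_session_upd2 M U G G' p q Cp Cq :
  typed_session M U G ->
  (forall r, part_of r G' -> part_of r G) ->
  (forall r C, In (r, C) M -> r <> p -> r <> q -> conforms U G' r C) ->
  conforms U G' p Cp -> conforms U G' q Cq ->
  typed_session (upd q Cq (upd p Cp M)) U G'.
Proof.
  intros (Hnd & Hparts & _)%typed_session_iff Hpart_of Hothers Hp Hq.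
  apply typed_session_iff; rewrite !map_fst_upd; split; [|split]; auto.
  - intros r [Hr|Hr]; apply Hparts; [left; auto|right; auto].
  - intros r C [[-> ->]|[Hrq [[-> ->]|[Hrp HrC]]%In_upd]]%In_upd; auto.
Qed.

Lemma out_typed_In Gm bs Ts l e P :
  out_typed Gm bs Ts -> In (l, e, P) bs ->
  exists S T, In (l, S, T) Ts /\ expr_typed Gm e S /\ proc_typed Gm P T.
Proof.
  induction 1 as [|Gm l0 e0 P0 S0 T0 bs Ts He HP _ IH]; simpl; [tauto|]. intros [E|Hin].
  - inversion E; subst; eauto 7.
  - destruct (IH Hin) as (S & T & ? & ? & ?); eauto 7.
Qed.

Lemma in_typed_In Gm cs Ts l x S Q :
  in_typed Gm cs Ts -> In (l, x, S, Q) cs ->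
  exists T, In (l, S, T) Ts /\ proc_typed (extend Gm x S) Q T.
Proof.
  induction 1 as [|Gm l0 x0 S0 P0 T0 bs Ts HP _ IH]; simpl; [tauto|]. intros [E|Hin].
  - inversion E; subst; eauto.
  - destruct (IH Hin) as (T & ? & ?); eauto.
Qed.

Lemma in_typed_labels Gm cs Ts : in_typed Gm cs Ts ->
  map (fun b : label * var * sort * proc => fst (fst (fst b))) cs =
  map (fun b : label * sort * ltype => fst (fst b)) Ts.
Proof. induction 1; simpl; f_equal; auto. Qed.

Lemma conforms_Out U G p sp q bs l v P :
  conforms U G p (mkC sp (Out q bs)) -> In (l, EVal v, P) bs ->
  exists Ts S TG, projects G p (LOut q Ts) /\ In (l, S, TG) Ts /\ val_has_sort v S /\
    (forall G', projects G' p TG -> conforms U G' p (mkC sp P)).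
Proof.
  intros (tau & T & [Hsaved Hact] & (TG & Hpr & Hsub) & HU) Hin; simpl in Hact.
  inversion Hact as [|? ? ? Ts0 _ _ Hot| |]; subst.
  inversion Hsub as [|? ? Ts Hne Hsub_br| |]; subst.
  destruct (out_typed_In _ _ _ _ _ _ Hot Hin) as (S & TP & HinTs0 & He & HP).
  destruct (Hsub_br _ _ _ HinTs0) as (TG' & HinTs & HsubP).
  exists Ts, S, TG'; repeat split; auto.
  - inversion He; auto.
  - intros G' Hpr'; exists tau, TP; repeat split; eauto.
Qed.

Lemma conforms_Inp U G q sq p cs l x Srt Q :
  conforms U G q (mkC sq (Inp p cs)) -> In (l, x, Srt, Q) cs ->
  exists Tsq, projects G q (LIn p Tsq) /\
    forall S TG, In (l, S, TG) Tsq -> S = Srt /\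
      (forall v G', val_has_sort v S -> projects G' q TG -> conforms U G' q (mkC sq (subst x v Q))).
Proof.
  intros (tau & T & [Hsaved Hact] & (TG & Hpr & Hsub) & HU) Hin; simpl in Hact.
  inversion Hact as [| |? ? ? Tsq0 _ Hnd Hit|]; subst.
  inversion Hsub as [| |? Tsq0' Tsq _ Hsub_br|]; subst.
  destruct (in_typed_In _ _ _ _ _ _ _ Hit Hin) as (TQ & HinQ & HQ).
  exists Tsq; split; auto. intros S TG' HinTsq.
  destruct (Hsub_br _ _ _ HinTsq) as (TQ' & HinQ' & HsubQ).
  rewrite (in_typed_labels _ _ _ Hit) in Hnd.
  assert (E := NoDup_map_In_inj _ _ _ _ Hnd HinQ' HinQ eq_refl); inversion E; subst.
  split; auto. intros v G' Hv Hpr'.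
  exists tau, TQ; repeat split; eauto using subst_typed.
Qed.

Lemma comm_subject_reduction M U G p q sp sq bs cs l v P x Srt Q :
  typed_session M U G -> p <> q ->
  In (p, mkC sp (Out q bs)) M -> In (q, mkC sq (Inp p cs)) M ->
  In (l, EVal v, P) bs -> In (l, x, Srt, Q) cs ->
  val_has_sort v Srt /\ exists G', gstep U G (LbComm p q l) U G' /\
    typed_session (upd q (mkC sq (subst x v Q)) (upd p (mkC sp P) M)) U G'.
Proof.
  intros HT Hpq Hp Hq Hbp Hcq.
  destruct (conforms_Out _ _ _ _ _ _ _ _ _ (typed_session_conforms HT Hp) Hbp)
    as (Ts & S & TG & Hprp & HinTs & Hv & Hsender).
  destruct (conforms_Inp _ _ _ _ _ _ _ _ _ _ (typed_session_conforms HT Hq) Hcq) as (Tsq & Hprq & Hreceiver).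
  destruct (projects_comm_reduct U _ _ _ _ _ Hpq _ _ _ Hprp Hprq HinTs) as [G' Hcr].
  destruct (cr_receiver_sort _ _ _ _ _ _ _ _ _ Hcr) as [TGq HinTsq].
  destruct (Hreceiver _ _ HinTsq) as [<- Hcont].
  split; auto. exists G'; split; [apply Hcr|].
  apply typed_session_upd2 with G.
  - exact HT.
  - apply Hcr.
  - intros r C HrC Hrp Hrq; apply conforms_projects_mono with G; [exact (typed_session_conforms HT HrC)|].
    intros T; apply (cr_others _ _ _ _ _ _ _ _ _ Hcr); auto.
  - apply Hsender; eapply cr_sender; eauto.
  - apply Hcont; auto; eapply cr_receiver; eauto.
Qed.

Lemma typed_session_Forall2 (R : config -> config -> Prop) M M' U G U' G' :
  typed_session M U G ->
  Forall2 (fun e e' => fst e = fst e' /\ R (snd e) (snd e')) M M' ->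
  (forall r, session_part U' G' r -> session_part U G r) ->
  (forall r C C', In (r, C) M -> R C C' -> conforms U' G' r C') ->
  typed_session M' U' G'.
Proof.
  intros (Hnd & Hparts & _)%typed_session_iff HF Hpart Hconf.
  assert (Hfst : map fst M = map fst M') by (eapply Forall2_map_eq; [exact HF|]; intros ? ? []; auto).
  apply typed_session_iff; rewrite <- Hfst; split; [|split]; auto.
  - intros r Hr; apply Hparts, Hpart, Hr.
  - intros r C' HrC'. destruct (Forall2_In_r _ _ _ _ HF HrC') as [[r0 C] [HrC [E HR]]].
    simpl in E, HR; subst; eauto.
Qed.

Lemma conforms_Chk U G r C c P :
  conforms U G r C -> active C = Chk c P ->
  exists TP TG, proc_typed empty_env P TP /\ subtype TP TG /\ projects G r (LChk c TG).
Proof.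
  intros (tau & T & [_ Hact] & (TG & Hpr & Hsub) & _) HC; rewrite HC in Hact.
  inversion Hact; subst; inversion Hsub; subst; eauto.
Qed.

Lemma typed_session_all_Chk M U G c :
  typed_session M U G -> M <> [] -> (forall r C, In (r, C) M -> exists P, active C = Chk c P) ->
  exists G0, G = GChk c G0.
Proof.
  intros HT HM Hall. pose proof HT as (_ & Hparts & _)%typed_session_iff.
  assert (Hproj : forall r C, In (r, C) M -> exists TG, projects G r (LChk c TG)).
  { intros r C HrC. destruct (Hall r C HrC) as [P HP].
    destruct (conforms_Chk _ _ _ _ _ _ (typed_session_conforms HT HrC) HP) as (_ & TG & _ & _ & ?); eauto. }
  destruct M as [|[r0 C0] M0]; [congruence|].
  destruct G as [|a b bs|c' G0].
  - destruct (Hproj r0 C0) as [TG Hpr]; [left; auto|]. inversion Hpr.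
  - assert (Ha : In a (map fst ((r0, C0) :: M0))) by (apply Hparts; left; constructor).
    apply in_map_iff in Ha as [[a' Ca] [<- Hina]].
    destruct (Hproj _ _ Hina) as [TG Hpr]; inversion Hpr; congruence.
  - destruct (Hproj r0 C0) as [TG Hpr]; [left; auto|]. inversion Hpr; subst; eauto.
Qed.

Lemma conforms_chk U G0 r C c P :
  conforms U (GChk c G0) r C -> active C = Chk c P ->
  conforms (U ++ [(c, G0)]) G0 r (mkC (saved C ++ [(c, P)]) P).
Proof.
  intros HC HP. destruct (conforms_Chk _ _ _ _ _ _ HC HP) as (TP & TG & HtP & Hsub & Hpr).
  destruct HC as (tau & T & [Hsaved _] & _ & HU).
  inversion Hpr; subst.
  exists (tau ++ [(c, TP)]), TP; repeat split; simpl; eauto.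
  - apply Forall2_app; auto.
  - apply Forall2_app; auto. constructor; [|constructor]. simpl; eauto.
Qed.

Lemma chk_subject_reduction M U G c M' :
  typed_session M U G -> M <> [] ->
  Forall2 (fun e e' => fst e = fst e' /\
             exists P, active (snd e) = Chk c P /\
                       snd e' = mkC (saved (snd e) ++ [(c, P)]) P) M M' ->
  exists G0, gstep U G (LbChk c) (U ++ [(c, G0)]) G0 /\ typed_session M' (U ++ [(c, G0)]) G0.
Proof.
  intros HT HM HF.
  assert (Hall : forall r C, In (r, C) M -> exists P, active C = Chk c P).
  { intros r C HrC. destruct (Forall2_In_l _ _ _ _ HF HrC) as (_ & _ & _ & P & HP & _); eauto. }
  destruct (typed_session_all_Chk _ _ _ _ HT HM Hall) as [G0 ->].
  exists G0; split; [constructor|].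
  eapply (typed_session_Forall2 (fun C C' => exists P, active C = Chk c P /\
                                   C' = mkC (saved C ++ [(c, P)]) P)); eauto.
  - intros r [Hr|(c' & Gc & Hin & Hr)]; [left; constructor; auto|].
    apply in_app_or in Hin as [Hin|[E|[]]]; [right; eauto|].
    inversion E; subst; left; constructor; auto.
  - intros r C C' HrC (P & HP & ->).
    exact (conforms_chk _ _ _ _ _ _ (typed_session_conforms HT HrC) HP).
Qed.

Lemma conforms_saved_names U G r C : conforms U G r C -> map fst (saved C) = map fst U.
Proof.
  intros (tau & T & [Hsaved _] & _ & HU). transitivity (map fst tau).
  - eapply Forall2_map_eq; [exact Hsaved|]. intros ? ? []; auto.
  - eapply Forall2_map_eq; [exact HU|]. intros ? ? []; auto.
Qed.

Lemma conforms_roll U G r C s1 c P s2 U1 Gc U2 :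
  conforms U G r C -> saved C = s1 ++ (c, P) :: s2 -> ~ In c (map fst s2) ->
  U = U1 ++ (c, Gc) :: U2 -> ~ In c (map fst U2) ->
  conforms (U1 ++ [(c, Gc)]) Gc r (mkC (s1 ++ [(c, P)]) P).
Proof.
  intros HC Hs Hc HU Hc'.
  assert (Hnames : map fst s1 = map fst U1).
  { pose proof (conforms_saved_names _ _ _ _ HC) as E.
    rewrite Hs, HU, !map_app in E; simpl in E.
    destruct (app_inj_pivot _ _ _ _ _ E) as [[[_ ?]|[? _]]|[? _]]; tauto. }
  destruct HC as (tau & T & [Hsaved _] & _ & HUtau). rewrite Hs in Hsaved.
  apply Forall2_app_inv_l in Hsaved as (t1 & t2 & Hs1 & Hs2 & ->).
  inversion Hs2 as [|[c0 P0] [c1 Tc] ? t2' [Ec HtP] _]; subst; simpl in Ec; subst c1.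
  assert (Hlen : length t1 = length U1).
  { rewrite <- (Forall2_length Hs1), <- (length_map fst s1), Hnames, length_map; auto. }
  destruct (Forall2_app_cons_inv _ _ _ _ _ _ _ Hlen HUtau) as [HU1 [_ [TGc [Hpr Hsub]]]].
  exists (t1 ++ [(c, Tc)]), Tc; repeat split; simpl; eauto.
  - apply Forall2_app; auto.
  - apply Forall2_app; auto. constructor; [|constructor]. simpl; eauto.
Qed.

Lemma roll_subject_reduction M U G c M' :
  typed_session M U G -> M <> [] ->
  Forall2 (fun e e' => fst e = fst e' /\
             exists s1 P s2, saved (snd e) = s1 ++ (c, P) :: s2 /\ ~ In c (map fst s2) /\
                             snd e' = mkC (s1 ++ [(c, P)]) P) M M' ->
  exists U1 Gc, gstep U G (LbRoll c) (U1 ++ [(c, Gc)]) Gc /\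
                typed_session M' (U1 ++ [(c, Gc)]) Gc.
Proof.
  intros HT HM HF.
  destruct M as [|[r0 C0] M0] eqn:EM; [congruence|]; rewrite <- EM in *.
  assert (Hin0 : In (r0, C0) M) by (rewrite EM; left; auto).
  destruct (Forall2_In_l _ _ _ _ HF Hin0) as (e0 & _ & _ & s1 & P & s2 & Hs & Hc & _).
  pose proof (conforms_saved_names _ _ _ _ (typed_session_conforms HT Hin0)) as Hnames.
  simpl in Hs; rewrite Hs, map_app in Hnames; simpl in Hnames; symmetry in Hnames.
  apply map_eq_app in Hnames as (U1 & U2' & -> & _ & Hnames2).
  apply map_eq_cons in Hnames2 as ([c' Gc] & U2 & -> & Ec & Hnames2); simpl in Ec; subst c'.
  assert (Hc' : ~ In c (map fst U2)) by (rewrite Hnames2; auto).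
  exists U1, Gc; split; [eapply gs_roll; eauto|].
  eapply (typed_session_Forall2 (fun C C' => exists s1 P s2, saved C = s1 ++ (c, P) :: s2 /\
            ~ In c (map fst s2) /\ C' = mkC (s1 ++ [(c, P)]) P)); eauto.
  - intros r Hr; right. destruct Hr as [Hr|(c1 & Gc1 & Hin & Hr)].
    + exists c, Gc; split; auto; apply in_elt.
    + apply in_app_or in Hin as [Hin|[E|[]]].
      * exists c1, Gc1; split; auto; apply in_or_app; auto.
      * inversion E; subst; exists c1, Gc1; split; auto; apply in_elt.
  - intros r C C' HrC (s1' & P' & s2' & Hs' & Hc1 & ->).
    eapply conforms_roll; eauto using typed_session_conforms.
Qed.

Lemma sstep_subject_reduction M U G a M' :
  typed_session M U G -> sstep M a M' ->
  exists U' G', gstep U G (label_of a) U' G' /\ typed_session M' U' G'.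
Proof.
  intros HT Hs; destruct Hs as [M p q sp sq bs cs l v P x Srt Q Hpq Hp Hq Hbp Hcq| M c M' HM HF| M c M' HM HF].
  - destruct (comm_subject_reduction _ _ _ _ _ _ _ _ _ _ _ _ _ _ _ HT Hpq Hp Hq Hbp Hcq)
      as [_ [G' [? ?]]]; eauto.
  - destruct (chk_subject_reduction _ _ _ _ _ HT HM HF) as [G0 [? ?]]; eauto.
  - destruct (roll_subject_reduction _ _ _ _ _ HT HM HF) as (U1 & Gc & ? & ?); eauto.
Qed.

Lemma sstep_comm_well_sorted M U G p q l v x Srt M' :
  typed_session M U G -> sstep M (AComm p q l v x Srt) M' -> val_has_sort v Srt.
Proof.
  intros HT Hs; inversion Hs; subst.
  eapply comm_subject_reduction; eauto.
Qed.

Lemma nstep_wt N pos a N' : wt_network N -> nstep N pos a N' -> wt_network N'.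
Proof.
  intros Hw Hs; revert Hw.
  induction Hs as [M a M' HsM| | ]; intros Hw; inversion Hw as [M0 U G HT|]; subst;
    [|constructor; auto..].
  destruct (sstep_subject_reduction _ _ _ _ _ HT HsM) as (U' & G' & _ & ?); econstructor; eauto.
Qed.

Lemma nsteps_wt N tr N' : wt_network N -> nsteps N tr N' -> wt_network N'.
Proof. intros Hw Hs; induction Hs; eauto using nstep_wt. Qed.

Lemma nstep_comm_well_sorted N pos p q l v x Srt N' :
  wt_network N -> nstep N pos (AComm p q l v x Srt) N' -> val_has_sort v Srt.
Proof.
  intros Hw Hs; remember (AComm p q l v x Srt) as a eqn:Ea; revert Hw.
  induction Hs; intros Hw; inversion Hw; subst; eauto using sstep_comm_well_sorted.
Qed.

Lemma nstep_session_at N pos a N' M :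
  nstep N pos a N' -> session_at N pos = Some M ->
  exists M', sstep M a M' /\ session_at N' pos = Some M'.
Proof. induction 1; simpl; intros E; auto. inversion E; subst; eauto. Qed.

Lemma nstep_session_at_other N pos a N' pos' :
  nstep N pos a N' -> pos' <> pos -> session_at N' pos' = session_at N pos'.
Proof.
  intros Hs; revert pos'; induction Hs; intros [|[|] pos'] Hne; simpl; auto;
    try congruence; apply IHHs; congruence.
Qed.

Lemma nsteps_gtrace N tr N' pos M U G :
  nsteps N tr N' -> session_at N pos = Some M -> typed_session M U G ->
  gtrace U G (trace_at pos tr).
Proof.
  intros Hs; revert M U G; induction Hs as [|N pos' a N1 tr N' Hs1 _ IH]; intros M U G Hat HT.
  - constructor.
  - unfold trace_at; simpl. destruct (list_eq_dec bool_dec pos' pos) as [->|Hne].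
    + destruct (nstep_session_at _ _ _ _ _ Hs1 Hat) as (M1 & HsM & Hat1).
      destruct (sstep_subject_reduction _ _ _ _ _ HT HsM) as (U' & G' & Hg & HT').
      econstructor; [exact Hg|]. exact (IH _ _ _ Hat1 HT').
    + apply (IH M U G); auto. rewrite (nstep_session_at_other _ _ _ _ _ Hs1); auto.
Qed.

Theorem theorem2 :
  forall N : network, wt_network N ->
  (* (1) no reduction ever has a type mismatch *)
  (forall tr N' pos p q l v x Srt N'',
      nsteps N tr N' -> nstep N' pos (AComm p q l v x Srt) N'' ->
      ~ type_mismatch v Srt) /\
  (* (2) the communications (and checkpoints / rollbacks) of each session follow
         the global types typing it *)
  (forall tr N' pos M U G,
      nsteps N tr N' -> session_at N pos = Some M -> typed_session M U G ->
      gtrace U G (trace_at pos tr)).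
Proof.
  intros N Hw; split.
  - intros tr N' pos p q l v x Srt N'' Hss Hs Hmismatch.
    apply Hmismatch; exists Srt; split; auto.
    exact (nstep_comm_well_sorted _ _ _ _ _ _ _ _ _ (nsteps_wt _ _ _ Hw Hss) Hs).
  - intros; eapply nsteps_gtrace; eauto.
Qed.
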